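(* Let $q(z)$ be a mixing distribution and $q_\phi(x|z)$ a conditional density on $\mathbb{R}^d$ with tractable score $s_{q_\phi(\cdot|z)}(x)=\nabla_x\log q_\phi(x|z)$, and let $q_\phi(x)=\int q_\phi(x|z)q(z)\,\mathrm{d}z$, $q_\phi(x,z)=q_\phi(x|z)q(z)$. Let $p$ be a target density on $\mathbb{R}^d$ with score $s_p=\nabla\log p$, and $k$ a continuous positive semi-definite kernel on $\mathbb{R}^d$ with RKHS $\mathcal{H}_0$, $\mathcal{H}=\mathcal{H}_0^{\otimes d}$. Then the maximizer $f^*(x)=\mathbb{E}_{q_\phi(y)}k(x,y)[s_p(y)-s_{q_\phi}(y)]$ of $f\mapsto \mathbb{E}_{q_\phi(x)}[2f(x)^\top(s_p(x)-s_{q_\phi}(x))]-\|f\|_{\mathcal{H}}^2$ over $\mathcal{H}$ can be rewritten as $$f^*(x)=\mathbb{E}_{q_\phi(y,z)}\,k(x,y)\big[s_p(y)-s_{q_\phi(\cdot|z)}(y)\big],$$ and $$\mathrm{KSD}(q_\phi\|p)^2=\mathbb{E}_{q_\phi(x,z),\,q_\phi(x',z')}\Big[k(x,x')\big\langle s_p(x)-s_{q_\phi(\cdot|z)}(x),\ s_p(x')-s_{q_\phi(\cdot|z')}(x')\big\rangle\Big],$$ where $(x,z)$ and $(x',z')$ are independent draws from $q_\phi(x,z)$.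
   Context: $s_{q_\phi}=\nabla\log q_\phi$ is the (generally intractable) marginal score. The kernel Stein discrepancy is $\mathrm{KSD}(q\|p)^2=\mathbb{E}_{x,y\sim q}\big[(s_p(x)-s_q(x))^\top k(x,y)(s_p(y)-s_q(y))\big]$. *)

From HB Require Import structures.
From mathcomp Require Import all_boot all_order all_algebra.
From mathcomp Require Import all_classical all_reals all_analysis.
Set Implicit Arguments. Unset Strict Implicit. Unset Printing Implicit Defensive.
Import Order.TTheory GRing.Theory Num.Theory.
Import numFieldNormedType.Exports.
Local Open Scope classical_set_scope.
Local Open Scope ring_scope.

Definition mx_display : measure_display -> measure_display.
Proof. exact. Qed.

Section measurable_mx.
Context {d} {T : sigmaRingType d} (n : nat).
Let coor : 'I_n -> 'rV[T]_n -> T := fun i A => A ord0 i.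
Let s0 : g_sigma_preimage coor set0.
Proof. exact: sigma_algebra0. Qed.
Let sC A : g_sigma_preimage coor A -> g_sigma_preimage coor (~` A).
Proof. exact: sigma_algebraC. Qed.
Let sU (F : _^nat) : (forall i, g_sigma_preimage coor (F i)) ->
  g_sigma_preimage coor (\bigcup_i (F i)).
Proof. exact: sigma_algebra_bigcup. Qed.
HB.instance Definition _ := @isMeasurable.Build (mx_display d)
  'rV[T]_n (g_sigma_preimage coor) s0 sC sU.
End measurable_mx.


(* R^d is modelled as row vectors 'rV[R]_d, with the product (= Borel)      *)
(* sigma-algebra generated by the coordinates (instance above).             *)
Section ksd_defs.
Context {R : realType} {d : nat}.
Local Notation V := 'rV[R]_d.

Definition ei (i : 'I_d) : V := delta_mx ord0 i.

Definition is_lebesgue (leb : {sigma_finite_measure set V -> \bar R}) : Prop :=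
  forall a b : V, (forall i, a ord0 i <= b ord0 i) ->
    leb [set x : V | forall i, a ord0 i <= x ord0 i <= b ord0 i] =
    (\prod_(i < d) (b ord0 i - a ord0 i))%:E.

Definition dotv (u v : V) : R := \sum_(i < d) u ord0 i * v ord0 i.

Definition score (f : V -> R) (x : V) : V :=
  \row_(i < d) 'D_(ei i) (fun y => ln (f y)) x.

Definition psd_kernel (k : V -> V -> R) : Prop :=
  (forall x y, k x y = k y x) /\
  (forall (n : nat) (xs : 'I_n -> V) (c : 'I_n -> R),
     0 <= \sum_(a < n) \sum_(b < n) c a * c b * k (xs a) (xs b)).

Definition marginal {dZ} {Z : measurableType dZ}
  (Q : {measure set Z -> \bar R}) (qc : V -> Z -> R) (x : V) : R :=
  \int[Q]_z qc x z.

Definition KSD2 (leb : {sigma_finite_measure set V -> \bar R}) (k : V -> V -> R)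
  (p q : V -> R) : R :=
  \int[(leb \x leb)%E]_w
     (k w.1 w.2 * dotv (score p w.1 - score q w.1) (score p w.2 - score q w.2)
        * q w.1 * q w.2).

Definition fstar (leb : {sigma_finite_measure set V -> \bar R}) (k : V -> V -> R)
  (p q : V -> R) (x : V) : V :=
  \row_(i < d) \int[leb]_y (k x y * (score p y - score q y) ord0 i * q y).

End ksd_defs.

From HB Require Import structures.
From mathcomp Require Import all_boot all_order all_algebra.
From mathcomp Require Import all_classical all_reals all_analysis.
From mathcomp Require Import measurable_realfun ring.
Import Order.TTheory GRing.Theory Num.Theory.
Import numFieldNormedType.Exports.
Local Open Scope classical_set_scope.
Local Open Scope ring_scope.

(* Differentiating q(y) = \int q(y|z) dQ(z) under the integral sign gives
   s_q(y) q(y) = \int s_{q(.|z)}(y) q(y|z) dQ(z): the marginal score is the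
   posterior mean of the conditional scores. Hence, coordinatewise,
   (s_p(y) - s_q(y)) q(y) = \int (s_p(y) - s_{q(.|z)}(y)) q(y|z) dQ(z).
   Substituting this once into f* and twice into the double integral defining
   KSD^2, and exchanging the integrals by Fubini, gives both identities. *)

Section derive_along_line.
Context {R : realType} {V W : normedModType R}.
Implicit Types (f : V -> W) (x v : V) (t : R).

Let difference_quotient_line f x v t :
  (fun h : R => h^-1 *: ((fun s : R => f (x + s *: v)) (h *: 1 + t)
                         - (fun s : R => f (x + s *: v)) t)) =
  (fun h : R => h^-1 *: (f (h *: v + (x + t *: v)) - f (x + t *: v))).
Proof.
by apply/funext => h /=; rewrite scalerDl [h *: 1]mulr1 addrCA.
Qed.

Lemma derive_line f x v t :
  'D_1 (fun s : R => f (x + s *: v)) t = 'D_v f (x + t *: v).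
Proof. by rewrite /derive /= difference_quotient_line. Qed.

Lemma derivable_line f x v t :
  derivable (fun s : R => f (x + s *: v)) t 1 <-> derivable f (x + t *: v) v.
Proof. by rewrite /derivable difference_quotient_line. Qed.

End derive_along_line.

Lemma score_mul {R : realType} {d : nat} (f : 'rV[R]_d -> R) x i :
  0 < f x -> derivable f x (ei i) -> score f x ord0 i * f x = 'D_(ei i) f x.
Proof.
move=> fx_gt0 df.
have line0 (g : 'rV[R]_d -> R) :
    'D_(ei i) g x = derive1 (fun s : R => g (x + s *: ei i)) 0.
  by rewrite derive1E derive_line scale0r addr0.
have df_line : derivable (fun s : R => f (x + s *: ei i)) 0 1.
  by apply/derivable_line; rewrite scale0r addr0.
have fx0 : f (x + 0 *: ei i) = f x by rewrite scale0r addr0.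
have [dln ln'] := is_derive1_ln fx_gt0.
rewrite /score mxE !line0.
rewrite (derive1_comp (g := @ln R)) //= fx0 // derive1E ln'.
by rewrite mulrAC mulVf ?mul1r // gt_eqF.
Qed.

Lemma cvg_derive_harmonic {R : realType} {V : normedModType R} (f : V -> R) a v :
  derivable f a v ->
  (harmonic n)^-1 * (f (harmonic n *: v + a) - f a) @[n --> \oo] --> 'D_v f a.
Proof.
move=> df; pose quotient h := h^-1 * (f (h *: v + a) - f a).
have quotient_cvg : quotient h @[h --> 0^'] --> 'D_v f a := df.
apply: ((cvgr_dnbhsP quotient 0 ('D_v f a)).1 quotient_cvg harmonic).
by split; [move=> n; rewrite gt_eqF // harmonic_gt0 | exact: cvg_harmonic].
Qed.

Lemma measurable_derive {R : realType} {V : normedModType R}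
    {dT : measure_display} {T : measurableType dT} (f : V -> T -> R) (x v : V) :
  (forall y, measurable_fun setT (f y)) -> (forall t, derivable (f ^~ t) x v) ->
  measurable_fun setT (fun t => 'D_v (f ^~ t) x).
Proof.
move=> mf df.
apply: (measurable_fun_cvg
  (h := fun n t => (harmonic n)^-1 * (f (harmonic n *: v + x) t - f x t))).
  by move=> n; apply: measurable_funM => //; apply: measurable_funB.
by move=> t _; exact: cvg_derive_harmonic.
Qed.

Lemma Rintegral_gt0 {R : realType} {dT : measure_display} {T : measurableType dT}
    (mu : {measure set T -> \bar R}) (f : T -> R) :
  (0 < mu setT)%E -> (forall t, 0 < f t) -> mu.-integrable setT (EFin \o f) ->
  0 < \int[mu]_t f t.
Proof.
move=> mu_gt0 f_gt0 fi.
have mf : measurable_fun setT (EFin \o f) := measurable_int mu fi.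
have f_fin : (\int[mu]_t (f t)%:E)%E \is a fin_num :=
  integrable_fin_num measurableT fi.
have If_ge0 : (0 <= \int[mu]_t (f t)%:E)%E.
  by apply: integral_ge0 => t _; rewrite lee_fin ltW.
rewrite lt0r -lee_fin fineK // If_ge0 andbT; apply/eqP; rewrite /Rintegral => If0.
have abs_If0 : (\int[mu]_t `|(f t)%:E| = 0)%E.
  under eq_integral => t _ do rewrite gee0_abs ?lee_fin ?(ltW (f_gt0 t)) //.
  by rewrite -(fineK f_fin) If0.
have [N [mN muN0 f0N]] := (ae_eq_integral_abs mu measurableT mf).1 abs_If0.
suff mu0 : mu setT = 0%E by move: mu_gt0; rewrite mu0 ltxx.
apply/eqP; rewrite -measure_le0 -muN0 le_measure ?inE //.
by move=> t _; apply: f0N => /(_ I) /= /eqP; rewrite eqe gt_eqF.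
Qed.

(* The library's sigma-finite instance on [m1 \x m2] is shadowed by its
   subprobability instance (both are keyed on [product_measure1]), so it is
   rebuilt here on a copy of the product measure. *)
Section sigma_finite_product.
Local Open Scope ereal_scope.
Context {d1 d2} {T1 : measurableType d1} {T2 : measurableType d2} {R : realType}
  (m1 : {sigma_finite_measure set T1 -> \bar R})
  (m2 : {sigma_finite_measure set T2 -> \bar R}).

Lemma sigma_finite_product_measure : sigma_finite setT (m1 \x m2).
Proof.
have /sigma_finiteP[F [UF ndF mF]] := sigma_finiteT m1.
have /sigma_finiteP[G [UG ndG mG]] := sigma_finiteT m2.
exists (fun n => F n `*` G n).
  apply/seteqP; split => // -[x y] _.
  have [[i _ Fx] [j _ Gy]] : (\bigcup_n F n) x /\ (\bigcup_n G n) y.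
    by rewrite -UF -UG.
  exists (maxn i j) => //; split.
  - by move: Fx; apply/subsetPset/ndF/leq_maxl.
  - by move: Gy; apply/subsetPset/ndG/leq_maxr.
move=> n; have [mFn Fn_fin] := mF n; have [mGn Gn_fin] := mG n.
split; first exact: measurableX.
by rewrite product_measure1E // lte_mul_pinfty // ge0_fin_numE.
Qed.

Definition sigma_finite_product := m1 \x m2.
HB.instance Definition _ := Measure.on sigma_finite_product.
HB.instance Definition _ := Measure_isSigmaFinite.Build _ _ _
  sigma_finite_product sigma_finite_product_measure.

End sigma_finite_product.

Notation "m1 \x_sf m2" :=
  (SigmaFiniteMeasure.clone _ _ _ (sigma_finite_product m1 m2) _)
  (at level 40, left associativity) : ereal_scope.

Section fubini_factorized.
Context {d1 d2} {T1 : measurableType d1} {T2 : measurableType d2} {R : realType}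
  {m1 : {sigma_finite_measure set T1 -> \bar R}}
  {m2 : {sigma_finite_measure set T2 -> \bar R}}
  {f : T1 * T2 -> R} {c : T1 -> R} {b : T1 -> T2 -> R} {h : T1 -> R}.

Hypothesis fE : forall w, f w = c w.1 * b w.1 w.2.
Hypothesis b_int : forall x, m2.-integrable setT (fun y => (b x y)%:E).
Hypothesis bE : forall x, (\int[m2]_y (b x y)%:E = (h x)%:E)%E.

Let inner_integralE x : (\int[m2]_y (f (x, y))%:E = (c x * h x)%:E)%E.
Proof.
under eq_integral do rewrite fE /= EFinM.
by rewrite integralZl // bE.
Qed.

Lemma fubini_factorized : (m1 \x m2)%E.-integrable setT (fun w => (f w)%:E) ->
  m1.-integrable setT (fun x => (c x * h x)%:E) /\
  (\int[m1 \x m2]_w (f w)%:E = \int[m1]_x (c x * h x)%:E)%E.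
Proof.
move=> f_int; split.
  apply: (eq_integrable measurableT _ _ _ (integrable_fubini_F f_int)) => x _.
  exact: inner_integralE.
rewrite -integral12_prod_meas1 //; apply: eq_integral => x _.
exact: inner_integralE.
Qed.

Lemma integrable_prod_factorized : (forall x y, 0 <= b x y) ->
  measurable_fun setT f -> m1.-integrable setT (fun x => (c x * h x)%:E) ->
  (m1 \x m2)%E.-integrable setT (fun w => (f w)%:E).
Proof.
move=> b_ge0 mf /integrableP[_ ch_fin].
apply/integrable12ltyP; first exact/measurable_EFinP.
suff -> : (\int[m1]_x \int[m2]_y `|(f (x, y))%:E|)%E =
            (\int[m1]_x `|(c x * h x)%:E|)%E by [].
apply: eq_integral => x _.
have h_ge0 : (0 <= h x)%R.
  by rewrite -lee_fin -bE; apply: integral_ge0 => y _; rewrite lee_fin.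
under eq_integral do rewrite fE /= normrM (ger0_norm (b_ge0 _ _)) EFinM.
by rewrite integralZl // bE -EFinM /= normrM (ger0_norm h_ge0).
Qed.

End fubini_factorized.

Section product_swap.
Local Open Scope ereal_scope.
Context {d1 d2 d3} {T1 : measurableType d1} {T2 : measurableType d2}
  {T3 : measurableType d3} {R : realType}
  {m1 : {sigma_finite_measure set T1 -> \bar R}}
  {m2 : {sigma_finite_measure set T2 -> \bar R}}
  {m3 : {sigma_finite_measure set T3 -> \bar R}}.

Let measurable_swap23 :
  measurable_fun setT (fun w : (T1 * T3) * T2 => ((w.1.1, w.2), w.1.2)).
Proof.
apply: measurable_fun_pair.
  by apply: measurable_fun_pair => //; exact: measurableT_comp.
exact: measurableT_comp.
Qed.

Lemma ge0_integral_prod_swap (f : (T1 * T2) * T3 -> \bar R) :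
  measurable_fun setT f -> (forall w, 0 <= f w) ->
  \int[(m1 \x_sf m3) \x m2]_w f ((w.1.1, w.2), w.1.2) =
  \int[(m1 \x_sf m2) \x m3]_w f w.
Proof.
move=> mf f_ge0; have mfs := measurableT_comp mf measurable_swap23.
rewrite fubini_tonelli1 // [RHS]fubini_tonelli1 //.
transitivity (\int[m1]_x \int[m3]_z \int[m2]_y f ((x, y), z)).
  apply: (fubini_tonelli1 (m1 := m1) (m2 := m3)).
    exact: measurable_fun_fubini_tonelli_F.
  by move=> v; apply: integral_ge0.
transitivity (\int[m1]_x \int[m2]_y \int[m3]_z f ((x, y), z)).
  apply: eq_integral => x _.
  apply: (fubini_tonelli (m1 := m3) (m2 := m2) (fun v => f ((x, v.2), v.1))) => //.
  apply: measurableT_comp mf _; apply: measurable_fun_pair => //.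
  exact: measurable_fun_pair.
symmetry; apply: (fubini_tonelli1 (m1 := m1) (m2 := m2)).
  exact: measurable_fun_fubini_tonelli_F.
by move=> v; apply: integral_ge0.
Qed.

Lemma integrable_prod_swap (f : (T1 * T2) * T3 -> \bar R) :
  ((m1 \x_sf m2) \x m3).-integrable setT f ->
  ((m1 \x_sf m3) \x m2).-integrable setT (fun w => f ((w.1.1, w.2), w.1.2)).
Proof.
move=> /integrableP[mf f_fin]; apply/integrableP; split.
  exact: measurableT_comp.
rewrite (ge0_integral_prod_swap (fun w => `|f w|)) //.
exact: measurableT_comp.
Qed.

End product_swap.

Section marginal_derivative.
Context {R : realType} {d : nat} {dZ : measure_display} {Z : measurableType dZ}
  {Q : {measure set Z -> \bar R}} {qc : 'rV[R]_d -> Z -> R}.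
Hypothesis qc_int : forall x, Q.-integrable setT (fun z => (qc x z)%:E).
Hypothesis qc_der : forall x z i, derivable (qc ^~ z) x (ei i).
Hypothesis qc_dom : forall x i,
  exists G : Z -> R, Q.-integrable setT (EFin \o G) /\
  exists2 r : R, 0 < r & forall t z, `|t| < r ->
    `|'D_(ei i) (qc ^~ z) (x + t *: ei i)| <= G z.

Let shift0 (x v : 'rV[R]_d) : x + 0 *: v = x.
Proof. by rewrite scale0r addr0. Qed.

Let derive_marginal_under_integral y i :
  derivable (marginal Q qc) y (ei i) /\
  'D_(ei i) (marginal Q qc) y = \int[Q]_z 'D_(ei i) (qc ^~ z) y.
Proof.
have [G [G_int [r r_gt0 G_ub]]] := qc_dom y i.
pose f t z := qc (y + t *: ei i) z.
have I0 : `]-r, r[%classic (0 : R) by rewrite /= in_itv /= oppr_lt0 r_gt0.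
have G_ge0 z : 0 <= G z by apply: le_trans (G_ub 0 z _); rewrite ?normr0.
have f_int t : `]-r, r[%classic t -> Q.-integrable setT (EFin \o f t).
  by move=> _; exact: qc_int.
have f_der t z : `]-r, r[%classic t -> setT z -> derivable (f ^~ z) t 1.
  by move=> _ _; apply/(derivable_line (qc ^~ z)).
have f'_ub t z : `]-r, r[%classic t -> setT z -> `|partial1of2 f t z| <= G z.
  move=> /=; rewrite in_itv /= => /andP[t_gt t_lt] _.
  rewrite partial1of2E (derive_line (qc ^~ z)); apply: G_ub.
  by rewrite ltr_norml t_gt t_lt.
have dF := @derivable_under_integral R _ Z Q f setT measurableT 0 (-r) r I0
  f_int f_der G G_ge0 G_int f'_ub.
have DF := @differentiation_under_integral R _ Z Q f setT measurableT 0 (-r) r I0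
  f_int f_der G G_ge0 G_int f'_ub.
split.
  by have := (derivable_line (marginal Q qc) y (ei i) 0).1 dF; rewrite shift0.
rewrite -[in LHS](shift0 y (ei i)) -(derive_line (marginal Q qc)) -derive1E DF.
by apply: eq_Rintegral => z _; rewrite partial1of2E (derive_line (qc ^~ z)) shift0.
Qed.

Lemma derivable_marginal y i : derivable (marginal Q qc) y (ei i).
Proof. exact: (derive_marginal_under_integral y i).1. Qed.

Lemma derive_marginal y i :
  'D_(ei i) (marginal Q qc) y = \int[Q]_z 'D_(ei i) (qc ^~ z) y.
Proof. exact: (derive_marginal_under_integral y i).2. Qed.

Lemma integrable_derive_cond y i :
  (forall x, measurable_fun setT (qc x)) ->
  Q.-integrable setT (fun z => ('D_(ei i) (qc ^~ z) y)%:E).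
Proof.
move=> qc_meas; have [G [G_int [r r_gt0 G_ub]]] := qc_dom y i.
apply: (le_integrable measurableT _ _ G_int).
  by apply/measurable_EFinP; apply: measurable_derive.
move=> z _ /=; rewrite lee_fin; apply: le_trans (ler_norm (G z)).
by have := G_ub 0 z; rewrite normr0 shift0; apply.
Qed.

End marginal_derivative.

Section mixture.
Context {R : realType} {d : nat} {dZ : measure_display} {Z : measurableType dZ}
  (Q : {sigma_finite_measure set Z -> \bar R}) (qc : 'rV[R]_d -> Z -> R).
Local Notation q := (marginal Q qc).
Hypothesis Q_gt0 : (0 < Q setT)%E.
Hypothesis qc_gt0 : forall x z, 0 < qc x z.
Hypothesis qc_meas : measurable_fun setT (fun w : 'rV[R]_d * Z => qc w.1 w.2).
Hypothesis qc_der : forall x z i, derivable (qc ^~ z) x (ei i).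
Hypothesis qc_int : forall x, Q.-integrable setT (fun z => (qc x z)%:E).
Hypothesis qc_dom : forall x i,
  exists G : Z -> R, Q.-integrable setT (EFin \o G) /\
  exists2 r : R, 0 < r & forall t z, `|t| < r ->
    `|'D_(ei i) (qc ^~ z) (x + t *: ei i)| <= G z.

Let qc_section x : measurable_fun setT (qc x).
Proof. exact: (measurable_fun_pair2 x qc_meas). Qed.

Lemma marginal_gt0 y : 0 < q y.
Proof. by apply: Rintegral_gt0 => //; exact: qc_int. Qed.

Lemma EFin_marginal y : (q y)%:E = (\int[Q]_z (qc y z)%:E)%E.
Proof. by rewrite fineK //; exact: integrable_fin_num. Qed.

Lemma measurable_marginal : measurable_fun setT q.
Proof.
have qcE_meas : measurable_fun setT (fun w : 'rV[R]_d * Z => (qc w.1 w.2)%:E).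
  exact/measurable_EFinP.
apply/measurable_EFinP.
apply: eq_measurable_fun (measurable_fun_fubini_tonelli_F (m2 := Q) _ qcE_meas _).
  by move=> y _; rewrite /fubini_F /= EFin_marginal.
by move=> w; rewrite lee_fin ltW.
Qed.

Lemma integral_score_cond y i :
  (\int[Q]_z (score (qc ^~ z) y ord0 i * qc y z)%:E =
   (score q y ord0 i * q y)%:E)%E.
Proof.
have dq := derivable_marginal qc_int qc_der qc_dom y i.
under eq_integral do rewrite score_mul //.
rewrite score_mul ?marginal_gt0 // (derive_marginal qc_int qc_der qc_dom) fineK //.
by apply: integrable_fin_num => //; exact: integrable_derive_cond.
Qed.

Lemma integrable_score_cond y i :
  Q.-integrable setT (fun z => (score (qc ^~ z) y ord0 i * qc y z)%:E).
Proof.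
apply: (eq_integrable measurableT (fun z => ('D_(ei i) (qc ^~ z) y)%:E)).
  by move=> z _; rewrite score_mul.
exact: integrable_derive_cond.
Qed.

Section stein.
Variables (leb : {sigma_finite_measure set 'rV[R]_d -> \bar R})
  (p : 'rV[R]_d -> R) (k : 'rV[R]_d -> 'rV[R]_d -> R).
Local Notation u := (fun y z => score p y - score (qc ^~ z) y).
Hypothesis kp_int : forall x i,
  leb.-integrable setT (fun y => (k x y * score p y ord0 i * q y)%:E).
Hypothesis kcond_int : forall x i, (leb \x Q)%E.-integrable setT
  (fun w => (k x w.1 * score (qc ^~ w.2) w.1 ord0 i * qc w.1 w.2)%:E).
Hypothesis ksd_int : forall i, (((leb \x Q) \x leb) \x Q)%E.-integrable setT
  (fun w => (k w.1.1.1 w.1.2 * u w.1.1.1 w.1.1.2 ord0 i * u w.1.2 w.2 ord0 i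
             * qc w.1.1.1 w.1.1.2 * qc w.1.2 w.2)%:E).

Let gap_cond i y z := u y z ord0 i * qc y z.
Let gap_marg i y := (score p y - score q y) ord0 i * q y.

Let gap_condE i y z :
  gap_cond i y z = score p y ord0 i * qc y z - score (qc ^~ z) y ord0 i * qc y z.
Proof. by rewrite /gap_cond !mxE mulrBl. Qed.

Let integrable_gap_cond i y : Q.-integrable setT (fun z => (gap_cond i y z)%:E).
Proof.
apply: (eq_integrable measurableT (fun z => (score p y ord0 i)%:E * (qc y z)%:E
  - (score (qc ^~ z) y ord0 i * qc y z)%:E)%E).
  by move=> z _; rewrite gap_condE EFinB EFinM.
apply: integrableB => //; first exact: integrableZl.
exact: integrable_score_cond.
Qed.

Let integral_gap_cond i y : (\int[Q]_z (gap_cond i y z)%:E = (gap_marg i y)%:E)%E.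
Proof.
under eq_integral do rewrite gap_condE EFinB EFinM.
rewrite integralB //; first last.
- exact: integrable_score_cond.
- exact: integrableZl.
rewrite integralZl // -EFin_marginal integral_score_cond -EFinM -EFinB.
by rewrite /gap_marg !mxE mulrBl.
Qed.

Let measurable_marginal_inv : measurable_fun setT (fun y => (q y)^-1).
Proof.
apply: (eq_measurable_fun (fun y => expR (- ln (q y)))).
  by move=> y _; rewrite expRN lnK // posrE marginal_gt0.
apply: measurableT_comp => //; apply: measurable_funN.
exact: measurableT_comp measurable_marginal.
Qed.

(* [score p] need not be measurable: measurability of the integrand is
   recovered from [kp_int] by dividing by [q]. *)
Let integrable_kp_joint x i : (leb \x Q)%E.-integrable setT
  (fun w => (k x w.1 * score p w.1 ord0 i * qc w.1 w.2)%:E).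
Proof.
apply: (integrable_prod_factorized (c := fun y => k x y * score p y ord0 i)
  (b := qc) (h := q)) => //.
- by move=> y; rewrite EFin_marginal.
- by move=> y z; exact: ltW.
have kpq_meas : measurable_fun setT (fun y => k x y * score p y ord0 i * q y).
  by apply/measurable_EFinP; exact: measurable_int (kp_int x i).
apply: (eq_measurable_fun (fun w => k x w.1 * score p w.1 ord0 i * q w.1
                                     * ((q w.1)^-1 * qc w.1 w.2))).
  by move=> w _; rewrite /= mulrA mulfK // gt_eqF ?marginal_gt0.
apply: measurable_funM; first exact: measurableT_comp kpq_meas measurable_fst.
by apply: measurable_funM => //; exact: measurableT_comp measurable_marginal_inv _.
Qed.

Let kernel_gap x i :
  leb.-integrable setT (fun y => (k x y * gap_marg i y)%:E) /\
  (\int[leb \x Q]_w (k x w.1 * u w.1 w.2 ord0 i * qc w.1 w.2)%:E =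
   \int[leb]_y (k x y * gap_marg i y)%:E)%E.
Proof.
apply: (fubini_factorized (c := k x) (b := gap_cond i) (h := gap_marg i)) => //.
- by move=> w; rewrite /gap_cond mulrA.
apply: (eq_integrable measurableT _ _ _
  (integrableB measurableT (integrable_kp_joint x i) (kcond_int x i))).
by move=> w _; rewrite -EFinB !mxE; congr EFin; ring.
Qed.

Lemma fstar_mixtureE x : fstar leb k p q x =
  \row_(i < d) \int[(leb \x Q)%E]_w (k x w.1 * u w.1 w.2 ord0 i * qc w.1 w.2).
Proof.
apply/rowP => i; rewrite !mxE /Rintegral (kernel_gap x i).2; congr fine.
by apply: eq_integral => y _; rewrite /gap_marg mulrA.
Qed.

Let fstar_coord i x := \int[leb]_y (k x y * gap_marg i y).

Let EFin_fstar_coord i x :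
  (fstar_coord i x)%:E = (\int[leb]_y (k x y * gap_marg i y)%:E)%E.
Proof. by rewrite fineK // integrable_fin_num // (kernel_gap x i).1. Qed.

Let ksd_term i (w : 'rV[R]_d * 'rV[R]_d) :=
  k w.1 w.2 * gap_marg i w.1 * gap_marg i w.2.

Let ksd_mixture_term i (w : (('rV[R]_d * Z) * 'rV[R]_d) * Z) :=
  k w.1.1.1 w.1.2 * u w.1.1.1 w.1.1.2 ord0 i * u w.1.2 w.2 ord0 i
  * qc w.1.1.1 w.1.1.2 * qc w.1.2 w.2.

Let ksd_mixture_termE i :
  ((leb \x_sf Q) \x leb)%E.-integrable setT
    (fun v => (k v.1.1 v.2 * gap_cond i v.1.1 v.1.2 * gap_marg i v.2)%:E) /\
  (\int[(((leb \x Q) \x leb) \x Q)%E]_w (ksd_mixture_term i w)%:E =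
   \int[leb]_x (fstar_coord i x * gap_marg i x)%:E)%E.
Proof.
have [int3 ->] := fubini_factorized (m1 := ((leb \x_sf Q) \x_sf leb)%E) (m2 := Q)
  (f := ksd_mixture_term i)
  (c := fun v => k v.1.1 v.2 * gap_cond i v.1.1 v.1.2)
  (b := fun v => gap_cond i v.2)
  (h := fun v => gap_marg i v.2)
  (fun w => ltac:(rewrite /ksd_mixture_term /gap_cond /=; ring))
  (fun v => integrable_gap_cond i v.2) (fun v => integral_gap_cond i v.2)
  (ksd_int i).
split => //.
have [int2 ->] := fubini_factorized (m1 := (leb \x_sf Q)%E) (m2 := leb)
  (f := fun v => k v.1.1 v.2 * gap_cond i v.1.1 v.1.2 * gap_marg i v.2)
  (c := fun v => gap_cond i v.1 v.2) (b := fun v y => k v.1 y * gap_marg i y)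
  (h := fun v => fstar_coord i v.1)
  (fun w => ltac:(rewrite /=; ring))
  (fun v => (kernel_gap v.1 i).1) (fun v => esym (EFin_fstar_coord i v.1)) int3.
by have [_ ->] := fubini_factorized (m1 := leb) (m2 := Q)
  (f := fun v => gap_cond i v.1 v.2 * fstar_coord i v.1)
  (c := fstar_coord i) (b := gap_cond i) (h := gap_marg i)
  (fun w => ltac:(rewrite /=; ring))
  (integrable_gap_cond i) (integral_gap_cond i) int2.
Qed.

(* Integrability of [ksd_term] is not assumed: it follows from [ksd_int] by
   integrating out z' and then moving z to the outermost position. *)
Let ksd_term_mixtureE i :
  (leb \x leb)%E.-integrable setT (fun w => (ksd_term i w)%:E) /\
  (\int[(leb \x leb)%E]_w (ksd_term i w)%:E =
   \int[(((leb \x Q) \x leb) \x Q)%E]_w (ksd_mixture_term i w)%:E)%E.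
Proof.
have [int3 ->] := ksd_mixture_termE i.
have [int2 _] := fubini_factorized (m1 := (leb \x_sf leb)%E) (m2 := Q)
  (f := fun w => k w.1.1 w.1.2 * gap_cond i w.1.1 w.2 * gap_marg i w.1.2)
  (c := fun v => k v.1 v.2 * gap_marg i v.2) (b := fun v => gap_cond i v.1)
  (h := fun v => gap_marg i v.1)
  (fun w => ltac:(rewrite /=; ring))
  (fun v => integrable_gap_cond i v.1) (fun v => integral_gap_cond i v.1)
  (integrable_prod_swap _ int3).
have int_term : (leb \x leb)%E.-integrable setT (fun w => (ksd_term i w)%:E).
  apply: (eq_integrable measurableT _ _ _ int2) => w _.
  by rewrite /ksd_term /=; congr EFin; ring.
have [_ ->] := fubini_factorized (m1 := leb) (m2 := leb)
  (f := ksd_term i) (c := gap_marg i) (b := fun x y => k x y * gap_marg i y)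
  (h := fstar_coord i)
  (fun w => ltac:(rewrite /ksd_term /=; ring))
  (fun x => (kernel_gap x i).1) (fun x => esym (EFin_fstar_coord i x)) int_term.
split; first exact: int_term.
by apply: eq_integral => x _; rewrite mulrC.
Qed.

Lemma KSD2_mixtureE : KSD2 leb k p q =
  \int[(((leb \x Q) \x leb) \x Q)%E]_w
    (k w.1.1.1 w.1.2 * dotv (u w.1.1.1 w.1.1.2) (u w.1.2 w.2)
     * qc w.1.1.1 w.1.1.2 * qc w.1.2 w.2).
Proof.
rewrite /KSD2 /Rintegral; congr fine.
transitivity (\int[(leb \x leb)%E]_w (\sum_(i < d) (ksd_term i w)%:E))%E.
  apply: eq_integral => w _; rewrite sumEFin /dotv; congr EFin.
  rewrite mulr_sumr !mulr_suml; apply: eq_bigr => i _.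
  by rewrite /ksd_term /gap_marg !mulrA; congr (_ * _); exact: mulrAC.
transitivity (\int[(((leb \x Q) \x leb) \x Q)%E]_w
                (\sum_(i < d) (ksd_mixture_term i w)%:E))%E; last first.
  apply: eq_integral => w _; rewrite sumEFin /dotv; congr EFin.
  by rewrite mulr_sumr !mulr_suml; apply: eq_bigr => i _; rewrite mulrA.
rewrite (integral_sum measurableT (fun i => (ksd_term_mixtureE i).1)).
rewrite (integral_sum measurableT ksd_int).
by apply: eq_bigr => i _; exact: (ksd_term_mixtureE i).2.
Qed.

End stein.

End mixture.

Theorem proposition1 (R : realType) (d : nat)
  (dZ : measure_display) (Z : measurableType dZ) (Q : probability Z R)
  (leb : {sigma_finite_measure set 'rV[R]_d -> \bar R})
  (qc : 'rV[R]_d -> Z -> R) (p : 'rV[R]_d -> R)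
  (k : 'rV[R]_d -> 'rV[R]_d -> R) :
  (* leb is the Lebesgue measure on R^d *)
  is_lebesgue leb ->
  (* q_phi(.|z) : a positive, differentiable probability density for every z *)
  (forall x z, 0 < qc x z) ->
  measurable_fun setT (fun w : 'rV[R]_d * Z => qc w.1 w.2) ->
  (forall z, (\int[leb]_x (qc x z)%:E = 1)%E) ->
  (forall x z i, derivable (qc ^~ z) x (ei i)) ->
  (* q_phi(x) = \int q_phi(x|z) q(dz) is finite, and differentiation under
     the integral sign is justified by local domination of the derivative *)
  (forall x, Q.-integrable setT (fun z => (qc x z)%:E)) ->
  (forall x i, exists G : Z -> R, Q.-integrable setT (EFin \o G) /\
     exists2 r : R, 0 < r & forall t z, `|t| < r ->
       `|'D_(ei i) (qc ^~ z) (x + t *: ei i)| <= G z) ->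
  (* target density p: positive, with partial derivatives *)
  (forall x, 0 < p x) ->
  (forall x i, derivable p x (ei i)) ->
  (* continuous positive semi-definite kernel *)
  psd_kernel k ->
  continuous (fun w : 'rV[R]_d * 'rV[R]_d => k w.1 w.2) ->
  let q := marginal Q qc in
  let u := fun (y : 'rV[R]_d) (z : Z) => score p y - score (qc ^~ z) y in
  (* the expectations involved exist (are absolutely convergent) *)
  (forall x i, leb.-integrable setT
     (fun y => (k x y * score p y ord0 i * q y)%:E)) ->
  (forall x i, (leb \x Q)%E.-integrable setT
     (fun w => (k x w.1 * score (qc ^~ w.2) w.1 ord0 i * qc w.1 w.2)%:E)) ->
  (forall i, (((leb \x Q) \x leb) \x Q)%E.-integrable setT
     (fun w => (k w.1.1.1 w.1.2 * u w.1.1.1 w.1.1.2 ord0 i * u w.1.2 w.2 ord0 i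
                 * qc w.1.1.1 w.1.1.2 * qc w.1.2 w.2)%:E)) ->
  (forall x, fstar leb k p q x =
     \row_(i < d) \int[(leb \x Q)%E]_w (k x w.1 * u w.1 w.2 ord0 i * qc w.1 w.2))
  /\
  KSD2 leb k p q =
     \int[(((leb \x Q) \x leb) \x Q)%E]_w
        (k w.1.1.1 w.1.2 * dotv (u w.1.1.1 w.1.1.2) (u w.1.2 w.2)
           * qc w.1.1.1 w.1.1.2 * qc w.1.2 w.2).
Proof.
move=> _ qc_gt0 qc_meas _ qc_der qc_int qc_dom _ _ _ _ q u kp_int kcond_int ksd_int.
have Q_gt0 : (0 < Q setT)%E by rewrite probability_setT lte01.
split; first by move=> x; apply: fstar_mixtureE.
exact: KSD2_mixtureE.
Qed.
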